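(* There is an absolute constant $d$ such that the following holds. Let $N>0$ and let $A,B\ge 0$ be integers with $A+B=N$. Let $X$ be chosen uniformly at random among all strings in $\{0,1\}^N$ with exactly $A$ ones and $B$ zeros. Then for every $r\ge 1$, $$\Pr_X\left[\,C_{OP}(X)\ \ge\ N-\tfrac{2}{3}\min(A,B)+d\sqrt{rN}\,\right]\ \le\ 2^{-r}\log N .$$
   Context: Logarithms are base $2$. The oblivious-pairing algorithm on input $X=X_0\cdots X_{N-1}\in\{0,1\}^N$ maintains a list $\mathcal S=(S_1,\dots,S_\ell)$ of disjoint subsets of $\{0,\dots,N-1\}$ (''blocks''), each known to be homogeneous (all bits of $X$ indexed by it are equal); $X_{S_j}$ denotes the common value of the bits in $S_j$. Initially $\mathcal S=(\{0\},\{1\},\dots,\{N-1\})$. The operation COMBINE$(\mathcal S,i)$ queries $X_a\oplus X_b$ for some $a\in S_i$, $b\in S_{i+1}$; if the answer is $0$ it replaces $S_i,S_{i+1}$ in the list by the single block $S_i\cup S_{i+1}$ (at that position), and otherwise it removes both $S_i$ and $S_{i+1}$ from the list. The algorithm runs, for $k=1,2,\dots,\lfloor\log N\rfloor$ in turn: while there exists $j$ with $1\le j<\ell$ and $|S_j|=|S_{j+1}|=2^{k-1}$, apply COMBINE$(\mathcal S,j)$ for the smallest such $j$. At the end it outputs ''tie'' if the list is empty and otherwise $X_{S_1}$. $C_{OP}(X)$ denotes the number of XOR queries (COMBINE operations) the oblivious-pairing algorithm makes on input $X$. *)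

From Stdlib Require Import Reals.
From mathcomp Require Import all_boot.

Set Implicit Arguments.
Unset Strict Implicit.
Unset Printing Implicit Defensive.

(* A string X in {0,1}^N is an N.-tuple bool; X_i = nth false X i
   (true = 1, false = 0). Blocks are lists of indices. *)
Definition bitX (N : nat) (X : N.-tuple bool) (i : nat) : bool := nth false X i.

(* COMBINE on two adjacent blocks: query X_a xor X_b with a in s1, b in s2
   (we take a = head of s1, b = head of s2). *)
Definition combine_pair N (X : N.-tuple bool) (s1 s2 : seq nat) (rest : seq (seq nat))
  : seq (seq nat) :=
  if addb (bitX X (head 0 s1)) (bitX X (head 0 s2)) then rest
  else (s1 ++ s2) :: rest.

Fixpoint op_step N (X : N.-tuple bool) (m : nat) (Sl : seq (seq nat))
  : option (seq (seq nat)) :=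
  match Sl with
  | s1 :: ((s2 :: rest) as t) =>
      if (size s1 == m) && (size s2 == m) then Some (combine_pair X s1 s2 rest)
      else omap (cons s1) (op_step X m t)
  | _ => None
  end.

(* The "while" loop of a phase, returning the new list and the number of
   COMBINE operations made.  Each COMBINE shortens the list, so fuel
   [size Sl] is enough to run the loop to completion. *)
Fixpoint op_phase_fuel N (X : N.-tuple bool) (fuel m : nat) (Sl : seq (seq nat))
  : seq (seq nat) * nat :=
  match fuel with
  | 0 => (Sl, 0)
  | f.+1 =>
      match op_step X m Sl with
      | None => (Sl, 0)
      | Some Sl' => let: (Sl'', c) := op_phase_fuel X f m Sl' in (Sl'', c.+1)
      end
  end.

Definition op_phase N (X : N.-tuple bool) (m : nat) (Sl : seq (seq nat)) :=
  op_phase_fuel X (size Sl) m Sl.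

Definition op_run N (X : N.-tuple bool) : seq (seq nat) * nat :=
  foldl (fun (st : seq (seq nat) * nat) k =>
           let: (Sl, c) := st in
           let: (Sl', c') := op_phase X (2 ^ k.-1) Sl in (Sl', c + c'))
        ([seq [:: i] | i <- iota 0 N], 0)
        (iota 1 (trunc_log 2 N)).

Definition C_OP N (X : N.-tuple bool) : nat := (op_run X).2.

Definition Rleb (x y : R) : bool := if Rle_dec x y then true else false.

Local Open Scope R_scope.

Definition log2 (x : R) : R := ln x / ln 2.

Definition prob_OP (N A B : nat) (d r : R) : R :=
  INR #|[set X : N.-tuple bool |
           (count id X == A) &&
           Rleb (INR N - 2 / 3 * INR (minn A B) + d * sqrt (r * INR N))
                (INR (C_OP X))]|
   / INR 'C(N, A).

From Stdlib Require Import Reals Lra ZArith Lia.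
From mathcomp Require Import all_boot.
From mathcomp Require Import zify.

Set Implicit Arguments.
Unset Strict Implicit.
Unset Printing Implicit Defensive.

(* The algorithm only compares first bits of blocks, so phase k acts on the
   sequence of block values by pairing consecutive bits, keeping one copy of
   each equal pair and dropping unequal pairs ([pair_reduce]); C_OP(X) is the
   sum over the phases of half the current length.
   For u uniform of length n and weight a, the reduction of u is again uniform
   once its length and weight are fixed, so an event of probability at most e
   for every length and weight keeps this bound after any number of phases.
   Within one phase, comparing the numbers of strings whose reductions have
   lengths l and l - 2 shows that fewer than (min(a, n - a) - E) / 2 unequal
   pairs occur with probability at most 2^-r when E^2 >= 1000 r n.
   If no phase is bad, the potential 2/3 min(#ones, #zeros) is paid for by the
   discarded bits plus a geometric sum of slacks, which bounds the number of
   queries; a union bound over the log N phases concludes. *)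

(** * Pair reduction *)

Lemma seq_ind2 (T : Type) (P : seq T -> Prop) :
  P [::] -> (forall x, P [:: x]) -> (forall x y s, P s -> P [:: x, y & s]) ->
  forall s, P s.
Proof.
move=> P0 P1 P2 s; suff [] : P s /\ forall x, P (x :: s) by [].
by elim: s => [|x s [IHs IHxs]]; split=> // y; apply: P2.
Qed.

Fixpoint pair_reduce (v : seq bool) : seq bool :=
  match v with
  | x :: y :: t => if addb x y then pair_reduce t else x :: pair_reduce t
  | _ => [::]
  end.

Lemma size_pair_reduce v : size (pair_reduce v) <= (size v)./2.
Proof. by elim/seq_ind2: v => //= x y v; case: (x (+) y) => /=; lia. Qed.

Definition unequal_pairs (v : seq bool) := (size v)./2 - size (pair_reduce v).

Definition minority (v : seq bool) := minn (count id v) (size v - count id v).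

Lemma count_pair_reduce v :
  count id v <= 2 * count id (pair_reduce v) + unequal_pairs v + odd (size v) /\
  size v - count id v <=
    2 * (size (pair_reduce v) - count id (pair_reduce v)) + unequal_pairs v + odd (size v).
Proof.
rewrite /unequal_pairs; elim/seq_ind2: v => [|x|x y v [IH1 IH2]] //=; first by case: x.
have h3 := size_pair_reduce v; have h4 := count_size id (pair_reduce v).
have h5 := count_size id v.
by case: x; case: y => /=; rewrite ?negbK; lia.
Qed.

Lemma size_pair_reduce_split v :
  size v = (size v)./2 + size (pair_reduce v) + unequal_pairs v + odd (size v).
Proof.
have h1 := size_pair_reduce v; have h2 := odd_double_half (size v).
by rewrite -addnn in h2; rewrite /unequal_pairs; lia.
Qed.

Lemma minority_pair_reduce v :
  minority v <= 2 * minority (pair_reduce v) + unequal_pairs v + odd (size v).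
Proof.
have [h1 h2] := count_pair_reduce v; have h3 := size_pair_reduce v.
by have h4 := count_size id (pair_reduce v); rewrite /minority; lia.
Qed.

Lemma size_iter_pair_reduce k v : 2 ^ k * size (iter k pair_reduce v) <= size v.
Proof.
elim: k => [|k IH]; first by rewrite mul1n.
rewrite iterS expnS (mulnC 2) -mulnA; apply: leq_trans IH; rewrite leq_mul2l.
have := size_pair_reduce (iter k pair_reduce v).
by have := odd_double_half (size (iter k pair_reduce v)); rewrite -addnn; lia.
Qed.

Lemma size_iter_pair_reduce_sum v j : size v =
  size (iter j pair_reduce v) +
  \sum_(k < j) (unequal_pairs (iter k pair_reduce v) + odd (size (iter k pair_reduce v))) +
  \sum_(k < j) (size (iter k pair_reduce v))./2.
Proof.
elim: j => [|j IH]; first by rewrite !big_ord0 !addn0.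
have := size_pair_reduce_split (iter j pair_reduce v).
by rewrite !big_ord_recr /= {1}IH; move: (\sum_(i < j) _) (\sum_(i < j) _) => S1 S2; lia.
Qed.

(** * The algorithm as iterated pair reduction *)

Section OnePhase.
Variables (N : nat) (X : N.-tuple bool).

Definition block_bit (s : seq nat) := bitX X (head 0 s).

Fixpoint combine_blocks (l : seq (seq nat)) : seq (seq nat) * seq (seq nat) :=
  match l with
  | s1 :: s2 :: t => let: (M, L) := combine_blocks t in
      if addb (block_bit s1) (block_bit s2) then (M, L) else ((s1 ++ s2) :: M, L)
  | _ => ([::], l)
  end.

Let unmatched m := all (fun s : seq nat => size s != m).

Lemma op_step_cons m p t : size p != m ->
  op_step X m (p :: t) = omap (cons p) (op_step X m t).
Proof. by move=> hp; case: t => [|s2 rest] //=; rewrite (negbTE hp). Qed.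

Lemma op_step_unmatched m l : unmatched m l -> op_step X m l = None.
Proof. by elim: l => [|p l IH] // /andP[hp hl]; rewrite op_step_cons // IH. Qed.

Lemma op_step_cat_unmatched m P l : unmatched m P ->
  op_step X m (P ++ l) = omap (cat P) (op_step X m l).
Proof.
elim: P => [|p P IH]; first by case: (op_step X m l).
by move=> /andP[hp hP]; rewrite cat_cons op_step_cons // IH //; case: (op_step X m l).
Qed.

Lemma op_step_single m s lo : unmatched m lo -> op_step X m (s :: lo) = None.
Proof.
case: lo => [|t rest] // hall; have /andP[ht _] := hall.
have -> : op_step X m [:: s, t & rest] = omap (cons s) (op_step X m (t :: rest)).
  by rewrite /= (negbTE ht) andbF.
by rewrite op_step_unmatched.
Qed.

Lemma op_phase_fuel_combine m main P lo f : 0 < m ->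
  unmatched m P -> all (fun s => size s == m) main -> unmatched m lo ->
  (size main)./2 <= f ->
  op_phase_fuel X f m (P ++ main ++ lo) =
    (P ++ (combine_blocks main).1 ++ (combine_blocks main).2 ++ lo, (size main)./2).
Proof.
move=> m0; elim/seq_ind2: main P f => [|s|s1 s2 rest IH] P f hP hmain hlo hf.
- by case: f {hf} => [|f] //=; rewrite op_step_cat_unmatched // op_step_unmatched.
- by case: f {hf} => [|f] //=; rewrite op_step_cat_unmatched // op_step_single.
case: f hf => [|f] hf //; move: hmain => /= /and3P[/eqP h1 /eqP h2 hrest].
rewrite op_step_cat_unmatched //= h1 h2 eqxx /= /combine_pair -/(block_bit s1) -/(block_bit s2).
case: (combine_blocks rest) (IH) => M L IHrest.
have hfr : (size rest)./2 <= f by move: hf => /=; lia.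
case: ifP => _; first by rewrite IHrest.
rewrite -cat1s catA IHrest -?catA // /unmatched all_cat; apply/andP; split=> //=.
by rewrite size_cat h1 h2 andbT; apply/eqP; lia.
Qed.

Lemma combine_blocks_spec m main : 0 < m -> all (fun s => size s == m) main ->
  [/\ map block_bit (combine_blocks main).1 = pair_reduce (map block_bit main),
      all (fun s => size s == m.*2) (combine_blocks main).1 &
      all (fun s => size s == m) (combine_blocks main).2].
Proof.
move=> m0; elim/seq_ind2: main => //= s1 s2 rest IH /and3P[/eqP h1 /eqP h2 hr].
have [IH1 IH2 IH3] := IH hr.
case: (combine_blocks rest) IH1 IH2 IH3 => M L /= IH1 IH2 IH3.
rewrite -/(block_bit s1) -/(block_bit s2); case: ifP => _ //=.
split=> //; last by rewrite IH2 size_cat h1 h2 addnn eqxx.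
rewrite IH1 /block_bit; congr (_ :: _).
by case: s1 h1 => [|x s1'] //= h1; lia.
Qed.

Definition phase_inv k (main lo : seq (seq nat)) :=
  all (fun s => size s == 2 ^ k) main && all (fun s => size s < 2 ^ k) lo.

Lemma op_phase_combine k main lo : phase_inv k main lo ->
  [/\ op_phase X (2 ^ k) (main ++ lo) =
        ((combine_blocks main).1 ++ (combine_blocks main).2 ++ lo, (size main)./2),
      phase_inv k.+1 (combine_blocks main).1 ((combine_blocks main).2 ++ lo) &
      map block_bit (combine_blocks main).1 = pair_reduce (map block_bit main)].
Proof.
case/andP=> hm hlo.
have m0 : 0 < 2 ^ k by rewrite expn_gt0.
have [e1 e2 e3] := combine_blocks_spec m0 hm.
have hlo' : unmatched (2 ^ k) lo by apply: sub_all hlo => s hs; rewrite neq_ltn hs.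
split=> //.
- rewrite /op_phase -(cat0s (main ++ lo)) op_phase_fuel_combine //.
  by rewrite /= size_cat; lia.
- rewrite /phase_inv all_cat expnS; apply/and3P; split.
  + by apply: sub_all e2 => s; rewrite mul2n.
  + by apply: sub_all e3 => s /eqP ->; lia.
  + by apply: sub_all hlo => s; lia.
Qed.

Definition op_run_step (st : seq (seq nat) * nat) k :=
  let: (Sl, c) := st in
  let: (Sl', c') := op_phase X (2 ^ k.-1) Sl in (Sl', c + c').

Lemma op_run_fold j k main lo c : phase_inv k main lo ->
  (foldl op_run_step (main ++ lo, c) (iota k.+1 j)).2 =
    c + \sum_(i < j) (size (iter i pair_reduce (map block_bit main)))./2.
Proof.
elim: j k main lo c => [|j IH] k main lo c hinv; first by rewrite big_ord0 addn0.
have [e1 e2 e3] := op_phase_combine hinv.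
rewrite /= {1}/op_run_step /= e1 IH // big_ord_recl /= size_map -addnA.
by congr (_ + (_ + _)); apply: eq_bigr => i _; rewrite add0n -iterS iterSr e3.
Qed.

Lemma C_OP_pair_reduce :
  C_OP X = \sum_(i < trunc_log 2 N) (size (iter i pair_reduce X))./2.
Proof.
have hinv : phase_inv 0 [seq [:: i] | i <- iota 0 N] [::].
  by rewrite /phase_inv andbT; apply/allP => s /mapP[i _ ->].
rewrite /C_OP /op_run -[X in foldl _ (X, 0)]cats0 (op_run_fold _ _ hinv) add0n.
suff -> : map block_bit [seq [:: i] | i <- iota 0 N] = X by [].
by rewrite -map_comp -[RHS](mkseq_nth false X) /mkseq size_tuple.
Qed.

End OnePhase.

(** * Strings of given length and weight *)

Fixpoint bitseqs n : seq (seq bool) :=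
  if n is n'.+1 then [seq true :: s | s <- bitseqs n'] ++ [seq false :: s | s <- bitseqs n']
  else [:: [::]].

Lemma mem_bitseqs n s : (s \in bitseqs n) = (size s == n).
Proof.
elim: n s => [|n IH] [|x s] //=.
- by rewrite mem_cat; apply/negbTE; rewrite negb_or; apply/andP; split;
     apply/mapP => -[].
- rewrite mem_cat eqSS -IH; case: x.
  + rewrite mem_map; last by move=> ? ? [].
    by case: (s \in bitseqs n) => //=; apply/negbTE/mapP => -[].
  + rewrite (mem_map (f := cons false)); last by move=> ? ? [].
    by rewrite orbC; case: (s \in bitseqs n) => //=; apply/negbTE/mapP => -[].
Qed.

Lemma uniq_bitseqs n : uniq (bitseqs n).
Proof.
elim: n => [|n IH] //=; rewrite cat_uniq !map_inj_uniq ?IH //; try by move=> ? ? [].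
by rewrite andbT; apply/hasPn => s /mapP[t _ ->]; apply/mapP => -[].
Qed.

Lemma card_tuple_bitseqs n (P : pred (seq bool)) :
  #|[set X : n.-tuple bool | P X]| = count P (bitseqs n).
Proof.
rewrite -sum1_card (eq_bigl (fun X : n.-tuple bool => P X)); last by move=> X; rewrite inE.
rewrite sum1_count -(count_map (@tval n bool) P).
apply/permP/uniq_perm; last 1 first.
- move=> s; rewrite mem_bitseqs; apply/mapP/idP => [[X _ ->]|/eqP hs].
    by rewrite size_tuple.
  by exists (Tuple (introT eqP hs)); rewrite ?mem_index_enum.
- by rewrite map_inj_uniq ?index_enum_uniq //; apply: val_inj.
- exact: uniq_bitseqs.
Qed.

Definition count_strings n a (Q : pred (seq bool)) :=
  count (fun u => (count id u == a) && Q u) (bitseqs n).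

Lemma count_stringsS n a Q : count_strings n.+1 a Q =
  (0 < a) * count_strings n a.-1 (fun u => Q (true :: u)) +
  count_strings n a (fun u => Q (false :: u)).
Proof.
rewrite /count_strings /= count_cat !count_map; congr (_ + _).
case: a => [|a] /=; last by rewrite mul1n; apply: eq_count => u /=; rewrite add1n eqSS.
by rewrite mul0n; apply/eqP; rewrite -leqn0 leqNgt -has_count; apply/hasPn.
Qed.

Lemma eq_count_strings n a (Q1 Q2 : pred (seq bool)) :
  (forall u, size u = n -> count id u = a -> Q1 u = Q2 u) ->
  count_strings n a Q1 = count_strings n a Q2.
Proof.
move=> h; apply: eq_in_count => u; rewrite mem_bitseqs => /eqP hs.
by case: eqP => //= ha; rewrite h.
Qed.

Lemma count_strings_sub n a (Q1 Q2 : pred (seq bool)) :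
  (forall u, size u = n -> count id u = a -> Q1 u -> Q2 u) ->
  count_strings n a Q1 <= count_strings n a Q2.
Proof.
move=> h; rewrite (@eq_count_strings n a Q1 (fun u => (size u == n) && Q1 u)).
  rewrite /count_strings; apply: sub_count => u /andP[/eqP ha /andP[/eqP hs hq]].
  by rewrite ha eqxx (h u hs ha hq).
by move=> u -> _; rewrite eqxx.
Qed.

Lemma count_strings_const n a (b : bool) : count_strings n a (fun=> b) = b * 'C(n, a).
Proof.
elim: n a => [|n IH] a; first by case: a; case: b.
rewrite count_stringsS !IH; case: a => [|a]; first by rewrite bin0 mul0n.
by rewrite binS mul1n mulnDr addnC.
Qed.

Lemma count_strings_predT n a : count_strings n a predT = 'C(n, a).
Proof. by rewrite -[RHS]mul1n -(count_strings_const n a true). Qed.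

Lemma count_strings_cons n a x y (f : seq bool -> seq bool) w :
  count_strings n a (fun u => x :: f u == y :: w) =
  (x == y) * count_strings n a (fun u => f u == w).
Proof.
case: eqP => [->|/eqP ne].
  by rewrite mul1n; apply: eq_count_strings => u _ _; rewrite eqseq_cons eqxx.
rewrite -[0 * _](count_strings_const n a false).
by apply: eq_count_strings => u _ _; rewrite eqseq_cons (negbTE ne).
Qed.

Lemma count_strings_cons_nil n a x (f : seq bool -> seq bool) :
  count_strings n a (fun u => x :: f u == [::]) = 0.
Proof. by rewrite -[0](count_strings_const n a false); apply: eq_count_strings. Qed.

(* A string u of length n has n./2 pairs; its reduction is a given w of
   length l and weight k iff the l equal pairs, placed in 'C(n./2, l) ways,
   carry w, while each of the n./2 - l unequal pairs (2 ways each) and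
   possibly an odd trailing bit contribute the remaining ones. *)
Definition reduce_fiber n a l k :=
  'C(n./2, l) * 2 ^ (n./2 - l) *
  ((2 * k + (n./2 - l) <= a) && (a <= 2 * k + (n./2 - l) + odd n)).

Lemma reduce_fiberSS_nil n a :
  reduce_fiber n.+2 a 0 0 = (0 < a) * reduce_fiber n a.-1 0 0 * 2.
Proof.
rewrite /reduce_fiber /= negbK !subn0 !bin0 !muln0 !add0n expnS.
case: a => [|a] /=; first by rewrite !muln0.
have -> : (n./2.+1 <= a.+1 <= n./2.+1 + odd n) = (n./2 <= a <= n./2 + odd n) by lia.
by rewrite !mul1n [RHS]mulnC mulnA.
Qed.

Lemma reduce_fiberSS_true n a l k :
  reduce_fiber n.+2 a l.+1 k.+1 =
  (1 < a) * reduce_fiber n a.-2 l k + (0 < a) * reduce_fiber n a.-1 l.+1 k.+1 * 2.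
Proof.
rewrite /reduce_fiber /= negbK subSS binS; set h := n./2.
case: (ltngtP l h) => hl; last first.
- rewrite hl subnn (bin_small (ltnSn h)) add0n !mul0n muln0 addn0 binn expn0 !mul1n.
  by case: a => [|[|a]] //=; rewrite ?add0n ?mul1n ?mul0n ?addn0; lia.
- by rewrite !bin_small //; lia.
have e : h - l = (h - l.+1).+1 by lia.
rewrite e expnS; set t := h - l.+1.
have -> : (2 * k.+1 + t.+1 <= a <= 2 * k.+1 + t.+1 + odd n) =
  (1 < a) && (2 * k + t.+1 <= a.-2 <= 2 * k + t.+1 + odd n) by lia.
have -> : (2 * k.+1 + t <= a.-1 <= 2 * k.+1 + t + odd n) =
  (1 < a) && (2 * k + t.+1 <= a.-2 <= 2 * k + t.+1 + odd n) by lia.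
move: (2 * k + t.+1 <= a.-2 <= 2 * k + t.+1 + odd n) => I.
by case: a => [|[|a]] /=; rewrite ?mul0n ?muln0 //=; nia.
Qed.

Lemma reduce_fiberSS_false n a l k :
  reduce_fiber n.+2 a l.+1 k =
  (0 < a) * reduce_fiber n a.-1 l.+1 k * 2 + reduce_fiber n a l k.
Proof.
rewrite /reduce_fiber /= negbK subSS binS mulnDl mulnDl; set h := n./2.
case: (ltngtP l h) => hl; last first.
- by rewrite hl (bin_small (ltnSn h)) !mul0n; case: (0 < a).
- by rewrite !bin_small //; lia.
have e : h - l = (h - l.+1).+1 by lia.
rewrite e expnS; set t := h - l.+1; congr (_ + _).
case: a => [|a] /=; first by rewrite addnS ltn0 muln0.
have -> : (2 * k + t <= a <= 2 * k + t + odd n) =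
  (2 * k + t.+1 <= a.+1 <= 2 * k + t.+1 + odd n) by lia.
by rewrite mul1n; nia.
Qed.

Lemma count_strings_pair_reduce_eq n a w :
  count_strings n a (fun u => pair_reduce u == w) =
  reduce_fiber n a (size w) (count id w).
Proof.
elim/ltn_ind: n a w => -[|[|n]] IH a w.
- by rewrite /count_strings /reduce_fiber /=; case: w => [|x w] /=; case: a.
- rewrite count_stringsS /count_strings /reduce_fiber /=.
  by case: w => [|x w] /=; case: a => [|[|a]].
have IHn := IH n (leqW (ltnSn n)).
rewrite !count_stringsS /=; case: w => [|[] w].
- by rewrite !count_strings_cons_nil IHn reduce_fiberSS_nil; case: a => [|a] /=; lia.
- rewrite !count_strings_cons !IHn /= reduce_fiberSS_true; move: (size w) (count id w) => l k.
  by case: a => [|[|a]] /=; rewrite ?mul0n ?mul1n ?muln0 ?addn0 ?add0n // muln2 -addnn ?addnA.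
- rewrite !count_strings_cons !IHn /= reduce_fiberSS_false; move: (size w) (count id w) => l k.
  by case: a => [|a] /=; rewrite ?mul0n ?mul1n ?muln0 ?addn0 ?add0n // muln2 -addnn ?addnA.
Qed.

Lemma count_strings_sum n a Q :
  count_strings n a Q = \sum_(u <- bitseqs n) (count id u == a) * Q u.
Proof.
rewrite /count_strings; elim: (bitseqs n) => [|u s IH]; first by rewrite big_nil.
by rewrite big_cons /= IH; case: (_ == a); case: (Q u).
Qed.

Lemma sum_seq_indicator (T : eqType) (s : seq T) x (F : T -> nat) : uniq s ->
  \sum_(y <- s) (x == y) * F y = (x \in s) * F x.
Proof.
elim: s => [|y s IH]; first by rewrite big_nil.
rewrite big_cons in_cons /= => /andP[hy hs]; rewrite IH //.
by case: (eqVneq x y) => [->|_]; rewrite ?(negbTE hy) /= ?mul0n ?mul1n ?addn0.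
Qed.

Lemma sum_ord_indicator n m (F : nat -> nat) :
  \sum_(l < n) (m == l :> nat) * F l = (m < n) * F m.
Proof.
elim: n => [|n IH]; first by rewrite big_ord0 ltn0.
rewrite big_ord_recr /= IH.
by case: (ltngtP m n) => [h|h|->]; [lia | lia | rewrite ltnSn mul1n].
Qed.

Lemma pair_reduce_expand n u (Q : pred (seq bool)) : size u = n ->
  nat_of_bool (Q (pair_reduce u)) =
  \sum_(l < n.+1) \sum_(w <- bitseqs l) (pair_reduce u == w) * Q w.
Proof.
move=> hu; under eq_bigr => l _ do rewrite sum_seq_indicator ?uniq_bitseqs // mem_bitseqs.
rewrite (sum_ord_indicator _ _ (fun=> nat_of_bool (Q (pair_reduce u)))).
rewrite ltnS -hu (leq_trans (size_pair_reduce u)) ?mul1n //.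
by rewrite -[X in _ <= X](odd_double_half (size u)) -addnn; lia.
Qed.

Lemma sum_bitseqs_weight n l (Q : pred (seq bool)) (F : nat -> nat) : l <= n ->
  \sum_(w <- bitseqs l) Q w * F (count id w) =
  \sum_(k < n.+1) F k * count_strings l k Q.
Proof.
move=> hl; transitivity (\sum_(w <- bitseqs l) \sum_(k < n.+1) (count id w == k) * (Q w * F k)).
  apply: eq_big_seq => w; rewrite mem_bitseqs => /eqP hw.
  rewrite (sum_ord_indicator _ _ (fun k => Q w * F k)).
  by rewrite ltnS (leq_trans (count_size _ _)) ?hw // mul1n.
rewrite exchange_big; apply: eq_bigr => k _ /=.
rewrite count_strings_sum big_distrr; apply: eq_bigr => w _ /=.
by case: (count id w == k); case: (Q w); rewrite /= ?mul0n ?muln0 ?mul1n ?muln1.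
Qed.

(* The reduction of a uniform string of given length and weight is, once its
   length and weight are fixed, again uniform. *)
Lemma count_strings_pair_reduce n a (Q : pred (seq bool)) :
  count_strings n a (fun u => Q (pair_reduce u)) =
  \sum_(l < n.+1) \sum_(k < n.+1) reduce_fiber n a l k * count_strings l k Q.
Proof.
rewrite count_strings_sum.
transitivity (\sum_(u <- bitseqs n) \sum_(l < n.+1) \sum_(w <- bitseqs l)
                (count id u == a) * (pair_reduce u == w) * Q w).
  apply: eq_big_seq => u; rewrite mem_bitseqs => /eqP hu.
  rewrite (pair_reduce_expand Q hu) big_distrr; apply: eq_bigr => l _ /=.
  by rewrite big_distrr; apply: eq_bigr => w _; rewrite -mulnA.
rewrite [LHS]exchange_big; apply: eq_bigr => l _ /=.
rewrite [LHS]exchange_big /= -(@sum_bitseqs_weight n l Q (reduce_fiber n a l) (ltn_ord l)).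
apply: eq_big_seq => w; rewrite mem_bitseqs => /eqP hw.
rewrite -hw -count_strings_pair_reduce_eq count_strings_sum big_distrr /=.
by apply: eq_bigr => u _; rewrite mulnC mulnA.
Qed.

Definition reduce_mass n a l k := reduce_fiber n a l k * 'C(l, k).

Definition reduce_size_count n a l := \sum_(k < n.+1) reduce_mass n a l k.

Lemma sum_reduce_size_count n a : \sum_(l < n.+1) reduce_size_count n a l = 'C(n, a).
Proof.
rewrite -count_strings_predT.
rewrite (count_strings_pair_reduce n a predT); apply: eq_bigr => l _; apply: eq_bigr => k _.
by rewrite count_strings_predT.
Qed.

Lemma count_strings_reduce_size n a (B : pred nat) :
  count_strings n a (fun u => B (size (pair_reduce u))) =
  \sum_(l < n.+1) B l * reduce_size_count n a l.
Proof.
rewrite (count_strings_pair_reduce n a (fun v => B (size v))).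
apply: eq_bigr => l _; rewrite big_distrr; apply: eq_bigr => k _ /=.
rewrite (@eq_count_strings l k _ (fun=> B l)); last by move=> u ->.
by rewrite count_strings_const /reduce_mass mulnCA.
Qed.

Lemma reduce_size_count_gt n a l : n./2 < l -> reduce_size_count n a l = 0.
Proof.
move=> hl; rewrite /reduce_size_count big1 // => k _.
by rewrite /reduce_mass /reduce_fiber bin_small.
Qed.

Lemma reduce_mass_gt0 n a l k : 0 < reduce_mass n a l k ->
  2 * k + (n./2 - l) <= a <= 2 * k + (n./2 - l) + odd n.
Proof. by rewrite /reduce_mass /reduce_fiber; case: (_ && _) => //; rewrite muln0. Qed.

Lemma reduce_mass_weight0 n a l : l <= n./2 -> (n./2 - l).+2 <= a ->
  reduce_mass n a l 0 = 0.
Proof.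
move=> hl ha; rewrite /reduce_mass /reduce_fiber.
have -> : (2 * 0 + (n./2 - l) <= a <= 2 * 0 + (n./2 - l) + odd n) = false by lia.
by rewrite muln0 mul0n.
Qed.

(* Reductions of lengths l and l + 2 differ by two unequal pairs of u turned
   into equal pairs, one carrying a 1 and one a 0. *)
Lemma reduce_mass_shift n a l k : l.+2 <= n./2 ->
  reduce_mass n a l k * ((n./2 - l.+2).+1 * (n./2 - l.+2).+2)
  = 4 * k.+1 * (l.+1 - k) * reduce_mass n a l.+2 k.+1.
Proof.
move=> hl; rewrite /reduce_mass /reduce_fiber.
set h := n./2; set y := h - l.+2.
have e1 : h - l = y.+2 by rewrite /y; lia.
rewrite e1.
have -> : (2 * k.+1 + y <= a <= 2 * k.+1 + y + odd n) =
          (2 * k + y.+2 <= a <= 2 * k + y.+2 + odd n) by lia.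
move: (2 * k + y.+2 <= a <= 2 * k + y.+2 + odd n : nat) => I.
have Ch : 'C(h, l.+2) * (l.+1 * l.+2) = 'C(h, l) * (y.+2 * y.+1).
  have a1 := mul_bin_left h l.+1; have a2 := mul_bin_left h l.
  have e2 : h - l.+1 = y.+1 by rewrite /y; lia.
  rewrite e2 in a1; rewrite e1 in a2.
  by rewrite mulnA (mulnC _ l.+1) -mulnA (mulnC _ l.+2) a1 mulnCA a2; nia.
have Cl : 'C(l.+2, k.+1) * (k.+1 * (l.+1 - k)) = 'C(l, k) * (l.+1 * l.+2).
  have b1 := mul_bin_diag l.+2 k; have b2 := mul_bin_down l.+1 k.
  rewrite /= in b1 b2; move: b1 b2.
  set C1 := 'C(l.+1, k); set C2 := 'C(l.+2, k.+1); set C0 := 'C(l, k); set q := l.+1 - k.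
  move=> b1 b2.
  have -> : C2 * (k.+1 * q) = (l.+2 * C1) * q by rewrite b1; nia.
  by rewrite -mulnA (mulnC C1 q) -b2; nia.
apply/eqP; rewrite -(@eqn_pmul2r (l.+1 * l.+2)) //; apply/eqP.
rewrite expnS expnS.
have -> : 4 * k.+1 * (l.+1 - k) * ('C(h, l.+2) * 2 ^ y * I * 'C(l.+2, k.+1)) * (l.+1 * l.+2)
  = (4 * 2 ^ y * I) * ('C(h, l.+2) * (l.+1 * l.+2)) * ('C(l.+2, k.+1) * (k.+1 * (l.+1 - k))).
  by set q := l.+1 - k; nia.
by rewrite Ch Cl; nia.
Qed.

Lemma reduce_mass_shift_factor n a l k : l.+2 <= n./2 ->
  0 < reduce_mass n a l.+2 k.+1 ->
  (a - (n./2 - l.+2).+1) * (n - a - (n./2 - l.+2).+1) <= 4 * k.+1 * (l.+1 - k).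
Proof.
move=> hl /reduce_mass_gt0 hi; have hn := odd_double_half n.
set h := n./2 in hl hi hn *; set y := h - l.+2 in hi *.
rewrite -mulnA -(mulnA 2 2) (mulnCA 2 k.+1) mulnA.
by apply: leq_mul; rewrite /y; lia.
Qed.

Lemma sum_shift_le (F : nat -> nat) (B : pred nat) n t :
  (forall l, B l -> t <= l)%nat ->
  (\sum_(l < n) B l * F (l - t) <= \sum_(l < n) F l)%nat.
Proof.
move=> hB.
have shift N : (\sum_(l < N + t) (t <= l) * F (l - t) = \sum_(l < N) F l)%nat.
  elim: N => [|N IH].
    by rewrite big_ord0 add0n big1 // => l _; rewrite leqNgt ltn_ord.
  by rewrite addSn !big_ord_recr /= IH leq_addl mul1n addnK.
have widen (G : nat -> nat) N k : (\sum_(l < N) G l <= \sum_(l < N + k) G l)%nat.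
  elim: k => [|k IH]; first by rewrite addn0.
  by rewrite addnS big_ord_recr /= (leq_trans IH (leq_addr _ _)).
apply: (@leq_trans (\sum_(l < n + t) (t <= l) * F (l - t))); last by rewrite shift.
apply: (leq_trans _ (widen (fun l => (t <= l) * F (l - t))%N n t)).
apply: leq_sum => l _; case hBl: (B l); last by rewrite mul0n.
by rewrite hB.
Qed.

(** * One phase: few unequal pairs are unlikely *)

Local Open Scope R_scope.

Lemma INR_muln m n : INR (m * n)%nat = INR m * INR n.
Proof. by rewrite -mult_INR multE. Qed.

Lemma INR_addn m n : INR (m + n)%nat = INR m + INR n.
Proof. by rewrite -plus_INR plusE. Qed.

Lemma INR_expn2 k : INR (2 ^ k)%nat = 2 ^ k.
Proof. by elim: k => [|k IH] //; rewrite expnS INR_muln IH. Qed.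

Lemma leR_sum_INR (I : Type) (s : seq I) (f h : I -> nat) (c1 c2 : R) :
  (forall i, c1 * INR (f i) <= c2 * INR (h i)) ->
  c1 * INR (\sum_(i <- s) f i) <= c2 * INR (\sum_(i <- s) h i).
Proof.
move=> H; elim: s => [|x s IH]; first by rewrite !big_nil /=; lra.
by rewrite !big_cons !INR_addn; have := H x; lra.
Qed.

Lemma sum_decay_le (M : nat -> nat) (B : pred nat) n t (c : R) :
  (forall l, B l -> (t <= l)%nat /\ c * INR (M l) <= INR (M (l - t)%nat)) ->
  c * INR (\sum_(l < n) B l * M l) <= INR (\sum_(l < n) M l).
Proof.
move=> hB; apply: Rle_trans (_ : 1 * INR (\sum_(l < n) B l * M (l - t)) <= _).
  apply: leR_sum_INR => l; case hBl: (B l); rewrite /= ?Rmult_0_r ?Rmult_1_l; last lra.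
  by rewrite !mul1n; case: (hB l hBl).
by rewrite Rmult_1_l; apply/le_INR/leP/sum_shift_le => l /hB[].
Qed.

Lemma reduce_size_count_ratio n a l (rho : R) : (l.+2 <= n./2)%nat ->
  ((n./2 - l.+2).+2 <= a)%nat -> 0 <= rho ->
  rho * INR ((n./2 - l.+2).+1 * (n./2 - l.+2).+2) <=
    INR ((a - (n./2 - l.+2).+1) * (n - a - (n./2 - l.+2).+1)) ->
  rho * INR (reduce_size_count n a l.+2) <= INR (reduce_size_count n a l).
Proof.
move=> hl ha hr hrho.
have e2 : reduce_size_count n a l.+2 = (\sum_(k < n) reduce_mass n a l.+2 k.+1)%nat.
  by rewrite /reduce_size_count big_ord_recl reduce_mass_weight0.
have e0 : (\sum_(k < n) reduce_mass n a l k <= reduce_size_count n a l)%nat.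
  by rewrite /reduce_size_count big_ord_recr /= leq_addr.
apply: Rle_trans (_ : 1 * INR (\sum_(k < n) reduce_mass n a l k) <= _); last first.
  by rewrite Rmult_1_l; apply/le_INR/leP.
rewrite e2; apply: leR_sum_INR => k.
case: (posnP (reduce_mass n a l.+2 k.+1)) => ht.
  by rewrite ht /=; have := pos_INR (reduce_mass n a l k); lra.
have hp := reduce_mass_shift_factor hl ht.
have hs := reduce_mass_shift a k hl.
set Y := ((n./2 - l.+2).+1 * (n./2 - l.+2).+2)%nat in hs hrho.
set t0 := reduce_mass n a l k in hs *; set t2 := reduce_mass n a l.+2 k.+1 in hs hp *.
have hY : 0 < INR Y by apply/lt_0_INR/ltP; rewrite /Y muln_gt0.
have h1 : INR t0 * INR Y = INR (4 * k.+1 * (l.+1 - k)) * INR t2 by rewrite -!INR_muln hs.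
have h2 := le_INR _ _ (elimT leP hp).
have h3 := pos_INR t2.
have h4 : rho * INR Y * INR t2 <= INR t0 * INR Y by nra.
rewrite Rmult_1_l; nra.
Qed.

Lemma geometric_chain (f : nat -> R) (rho : R) l s : 0 <= rho -> (2 * s <= l)%nat ->
  (forall i, (i < s)%nat -> rho * f (l - 2 * i)%nat <= f (l - 2 * i - 2)%nat) ->
  rho ^ s * f l <= f (l - 2 * s)%nat.
Proof.
move=> hr; elim: s => [|s IH] hs hstep; first by rewrite /= Rmult_1_l subn0; lra.
have IH' := IH ltac:(lia) (fun i hi => hstep i (ltnW hi)).
rewrite (_ : l - 2 * s.+1 = l - 2 * s - 2)%nat; last by lia.
apply: Rle_trans (hstep s (ltnSn s)); rewrite /= Rmult_assoc.
by apply: Rmult_le_compat_l.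
Qed.

Lemma growth_factor_le (m a b E Y : R) : 0 < E -> E < m -> m <= a -> m <= b ->
  1 <= Y -> Y < m / 2 - E / 3 ->
  (1 + E / m) ^ 2 * ((Y - 1) * Y) <= (a - Y + 1) * (b - Y + 1).
Proof.
move=> hE hEm hma hmb hY hYm; set eta := E / m.
have he : eta * m = E by rewrite /eta; field; lra.
have he0 : 0 < eta by apply: Rdiv_lt_0_compat; lra.
have h1 : eta * Y <= E / 2 by nra.
have h2 : ((1 + eta) * Y) ^ 2 <= (a - Y + 1) * (b - Y + 1).
  by rewrite /= Rmult_1_r; apply: Rmult_le_compat; nra.
have h3 : (1 + eta) ^ 2 * ((Y - 1) * Y) <= ((1 + eta) * Y) ^ 2.
  rewrite Rpow_mult_distr; apply: Rmult_le_compat_l; first exact: pow2_ge_0.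
  by rewrite /= Rmult_1_r; nra.
lra.
Qed.

Section Decay.
Variables (n a : nat) (E : R).
Let h := n./2.
Let m := minn a (n - a).
Hypotheses (hE : 0 < E) (hEm : E < INR m).

Lemma minn_weight_le_half : (m <= h)%nat.
Proof. by have := odd_double_half n; rewrite /m /h -addnn; lia. Qed.

Lemma reduce_size_count_decay l s :
  2 * INR (h - l) + E < INR m -> INR s <= E / 12 ->
  (2 * s <= l)%nat /\
  ((1 + E / INR m) ^ 2) ^ s * INR (reduce_size_count n a l) <=
    INR (reduce_size_count n a (l - 2 * s)).
Proof.
move=> hc hs.
have hmh := le_INR _ _ (elimT leP minn_weight_le_half).
have ha : INR m <= INR a by apply/le_INR/leP; rewrite /m; lia.
have hb : INR m <= INR (n - a) by apply/le_INR/leP; rewrite /m; lia.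
case: (leqP l h) => hlh; last first.
  have hlR : INR h < INR l by apply/lt_INR/ltP.
  split; first by apply/leP/INR_le; rewrite INR_muln /=; lra.
  rewrite reduce_size_count_gt // Rmult_0_r; exact: pos_INR.
rewrite minus_INR in hc; last exact/leP.
have h2s : (2 * s <= l)%nat.
  by apply/leP/INR_le; rewrite INR_muln /=; have := pos_INR (h - l)%nat; lra.
split=> //; apply: (geometric_chain (f := fun j => INR (reduce_size_count n a j))) => //.
  exact: pow2_ge_0.
move=> i hi; have hiR : INR i + 1 <= INR s by rewrite -S_INR; apply/le_INR/leP.
set l0 := (l - 2 * i - 2)%nat; have -> : (l - 2 * i = l0.+2)%nat by rewrite /l0; lia.
set y := (h - l + 2 * i)%nat.
have hy : (n./2 - l0.+2 = y)%nat by rewrite /y /l0 /h; lia.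
have hyR : INR y + 2 < INR m / 2 - E / 3.
  by rewrite /y INR_addn INR_muln minus_INR /=; [lra | exact/leP].
have hYa : (y.+2 <= a)%nat by apply/leP/INR_le; rewrite !S_INR; have := pos_INR m; lra.
have hYb : (y.+2 <= n - a)%nat by apply/leP/INR_le; rewrite !S_INR; have := pos_INR m; lra.
apply: reduce_size_count_ratio; rewrite ?hy; [lia | exact: hYa | exact: pow2_ge_0 |].
have f1 : INR (a - y.+1) = INR a - (INR y + 2) + 1.
  by rewrite minus_INR ?S_INR; [ring | apply/leP; lia].
have f2 : INR (n - a - y.+1) = INR (n - a) - (INR y + 2) + 1.
  by rewrite minus_INR ?S_INR; [ring | apply/leP; lia].
have f3 : INR (y.+1 * y.+2) = (INR y + 2 - 1) * (INR y + 2).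
  by rewrite INR_muln !S_INR; ring.
rewrite f3 INR_muln f1 f2; apply: growth_factor_le => //; have := pos_INR y; lra.
Qed.

End Decay.

Lemma nat_floor_exists x : 0 <= x -> exists k : nat, INR k <= x < INR k + 1.
Proof.
move=> hx; case: (archimed x) => h1 h2.
have hz : (0 < up x)%Z by apply: lt_IZR; rewrite /=; lra.
exists (Z.to_nat (up x - 1)).
by rewrite INR_IZR_INZ Z2Nat.id ?minus_IZR /=; [lra | lia].
Qed.

(* With q = floor(m / E) + 1 we have (1 + E/m)^q >= 2 by Bernoulli, and
   q * (floor r + 1) <= 2 s because E^2 dominates r n. *)
Lemma two_pow_le_growth n (m E r : R) s : 1 <= r -> 0 < E -> E < m -> m <= INR n ->
  1000 * r * INR n <= E * E -> E / 12 < INR s + 1 ->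
  Rpower 2 r <= ((1 + E / m) ^ 2) ^ s.
Proof.
move=> hr hE hEm hmn hEn hs.
have hE1000 : 1000 <= E by nra.
have [q [hq1 hq2]] : exists q : nat, INR q <= m / E < INR q + 1.
  by apply: nat_floor_exists; apply: Rlt_le; apply: Rdiv_lt_0_compat; lra.
have [J [hJ1 hJ2]] := nat_floor_exists (ltac:(lra) : 0 <= r).
set eta := E / m.
have hqJ : (q.+1 * J.+1 <= 2 * s)%nat.
  apply/leP/INR_le; rewrite !INR_muln !S_INR /=.
  have h1 : (m + E) * (r + 1) <= E * E / 6 - 2 * E by nra.
  have h2 : (INR q + 1) * (INR J + 1) <= (m / E + 1) * (r + 1).
    by apply: Rmult_le_compat; try lra; have := pos_INR q; have := pos_INR J; lra.
  have h3 : (m / E + 1) * (r + 1) * E = (m + E) * (r + 1) by field; lra.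
  have h4 : (m / E + 1) * (r + 1) <= E / 6 - 2.
    apply: (Rmult_le_reg_r E); first lra.
    by rewrite h3 (_ : (E / 6 - 2) * E = E * E / 6 - 2 * E); [lra | field].
  lra.
have hq : 2 <= (1 + eta) ^ q.+1.
  have he : m / E * eta = 1 by rewrite /eta; field; lra.
  have he0 : 0 < eta by apply: Rdiv_lt_0_compat; lra.
  by have := poly q.+1 eta he0; rewrite S_INR; nra.
apply: Rle_trans (_ : Rpower 2 (INR J.+1) <= _).
  by apply: Rle_Rpower; [lra | rewrite S_INR; lra].
rewrite Rpower_pow; last lra.
rewrite -pow_mult; apply: Rle_trans (_ : (1 + eta) ^ (q.+1 * J.+1) <= _); last first.
  apply: Rle_pow; [ |exact/leP]; have : 0 <= eta by apply: Rlt_le; apply: Rdiv_lt_0_compat; lra.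
  lra.
by rewrite pow_mult; apply: pow_incr; lra.
Qed.


Definition Rltb (x y : R) : bool := if Rlt_dec x y then true else false.

Definition few_unequal_pairs (E : R) (w : seq bool) : bool :=
  Rltb (2 * INR (unequal_pairs w) + E) (INR (minority w)).

Lemma few_unequal_pairsN E w : ~~ few_unequal_pairs E w ->
  INR (minority w) <= 2 * INR (unequal_pairs w) + E.
Proof. by rewrite /few_unequal_pairs /Rltb; case: Rlt_dec => //= h _; lra. Qed.

Lemma count_few_unequal_pairs n a (E r : R) : 1 <= r -> 0 <= E ->
  1000 * r * INR n <= E * E ->
  INR (count_strings n a (few_unequal_pairs E)) <= Rpower 2 (- r) * INR 'C(n, a).
Proof.
move=> hr hE hEn.
have hRp : 0 < Rpower 2 r by apply: exp_pos.
case: (leqP a n) => han; last first.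
  have : (count_strings n a (few_unequal_pairs E) <= count_strings n a predT)%nat.
    exact: count_strings_sub.
  by rewrite count_strings_predT bin_small // leqn0 => /eqP ->; rewrite /= Rmult_0_r; lra.
set m := minn a (n - a).
have hmn : INR m <= INR n by apply/le_INR/leP; rewrite /m; lia.
set B := fun l => Rltb (2 * INR (n./2 - l)%nat + E) (INR m).
have -> : count_strings n a (few_unequal_pairs E) =
          count_strings n a (fun u => B (size (pair_reduce u))).
  apply: eq_count_strings => u hu hc.
  by rewrite /few_unequal_pairs /B /unequal_pairs /minority hu hc.
rewrite count_strings_reduce_size -sum_reduce_size_count Rpower_Ropp.
have hM0 := pos_INR (\sum_(l < n.+1) reduce_size_count n a l).
case: (Rlt_dec E (INR m)) => hEm; last first.
  rewrite big1 /= => [|l _]; first by apply: Rmult_le_pos => //; apply/Rlt_le/Rinv_0_lt_compat.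
  rewrite /B /Rltb; case: Rlt_dec => //= hh; have := pos_INR (n./2 - l); lra.
have hE0 : 0 < E.
  by case: (Rle_lt_or_eq_dec _ _ hE) => // hE0; rewrite -hE0 Rmult_0_l in hEn; nra.
have [s [hs1 hs2]] := nat_floor_exists (ltac:(lra) : 0 <= E / 12).
have hrho := two_pow_le_growth hr hE0 hEm hmn hEn hs2.
have hsum : ((1 + E / INR m) ^ 2) ^ s * INR (\sum_(l < n.+1) B l * reduce_size_count n a l) <=
            INR (\sum_(l < n.+1) reduce_size_count n a l).
  apply: (@sum_decay_le _ _ n.+1 (2 * s)) => l; rewrite /B /Rltb; case: Rlt_dec => // hc _.
  exact: reduce_size_count_decay hE0 hEm l s hc hs1.
apply: (Rmult_le_reg_l (Rpower 2 r)) => //; rewrite -Rmult_assoc Rinv_r; last lra.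
have := Rmult_le_compat_r _ _ _ (pos_INR (\sum_(l < n.+1) B l * reduce_size_count n a l)) hrho.
lra.
Qed.

(** * All phases *)

Definition prob_le (e : R) (Q : pred (seq bool)) :=
  forall n a, INR (count_strings n a Q) <= e * INR 'C(n, a).

Lemma prob_le_pair_reduce e Q : 0 <= e -> prob_le e Q -> prob_le e (fun u => Q (pair_reduce u)).
Proof.
move=> he HQ n a; rewrite -count_strings_predT (count_strings_pair_reduce n a predT).
rewrite count_strings_pair_reduce -(Rmult_1_l (INR _)).
apply: leR_sum_INR => l; apply: leR_sum_INR => k.
rewrite !(INR_muln (reduce_fiber n a l k)) count_strings_predT Rmult_1_l.
by have := HQ l k; have := pos_INR (reduce_fiber n a l k); nra.
Qed.

Lemma prob_le_iter_pair_reduce e Q k : 0 <= e -> prob_le e Q ->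
  prob_le e (fun u => Q (iter k pair_reduce u)).
Proof.
move=> he; elim: k Q => [|k IH] Q HQ n a //.
have := prob_le_pair_reduce he (IH Q HQ) n a.
rewrite (@eq_count_strings _ _ _ (fun u => Q (iter k.+1 pair_reduce u))) //.
by move=> u _ _; rewrite iterSr.
Qed.

Definition phase_slack (u : R) (k : nat) : R := 32 * u * (3 / 4) ^ k.

(* Averaging [minority v <= 2 minority (pair_reduce v) + unequal_pairs v + odd]
   with the phase bound [minority v <= 2 unequal_pairs v + slack] shows that
   2/3 of the minority is paid for by discarded elements plus slack / 3. *)
Lemma minority_potential (u : R) v j :
  (forall k, (k < j)%nat -> INR (minority (iter k pair_reduce v)) <=
     2 * INR (unequal_pairs (iter k pair_reduce v)) + phase_slack u k) ->
  2 / 3 * INR (minority v) <=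
    2 / 3 * INR (minority (iter j pair_reduce v)) +
    INR (\sum_(k < j) (unequal_pairs (iter k pair_reduce v) +
                       odd (size (iter k pair_reduce v)))) +
    128 / 3 * u * (1 - (3 / 4) ^ j).
Proof.
elim: j => [|j IH] H; first by rewrite big_ord0 /=; lra.
have IH' := IH (fun k hk => H k (ltnW hk)); have Hj := H j (ltnSn j).
rewrite big_ord_recr /= !INR_addn.
set w := iter j pair_reduce v in Hj IH' *.
have hw : INR (minority w) <=
    2 * INR (minority (pair_reduce w)) + INR (unequal_pairs w) + INR (odd (size w)).
  by rewrite -(INR_muln 2) -!INR_addn; apply/le_INR/leP/minority_pair_reduce.
have := pos_INR (odd (size w)); rewrite /phase_slack in Hj.
set S := INR (\sum_(i < j) _) in IH' *; lra.
Qed.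

Lemma sum_half_sizes_lt (u : R) v j : 0 < u ->
  (forall k, (k < j)%nat ->
     ~~ few_unequal_pairs (phase_slack u k) (iter k pair_reduce v)) ->
  INR (\sum_(i < j) (size (iter i pair_reduce v))./2) <
    INR (size v) - 2 / 3 * INR (minority v) + 50 * u.
Proof.
move=> hu H.
have hpot := minority_potential (fun k hk => few_unequal_pairsN (H k hk)).
have hsize : INR (size v) =
    INR (size (iter j pair_reduce v)) +
    INR (\sum_(k < j) (unequal_pairs (iter k pair_reduce v) + odd (size (iter k pair_reduce v)))) +
    INR (\sum_(k < j) (size (iter k pair_reduce v))./2).
  by rewrite {1}(size_iter_pair_reduce_sum v j) !INR_addn.
have hmj : INR (minority (iter j pair_reduce v)) <= INR (size (iter j pair_reduce v)).
  apply/le_INR/leP; rewrite /minority.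
  by have := count_size id (iter j pair_reduce v); lia.
have hpow : 0 <= u * (3 / 4) ^ j by apply: Rmult_le_pos; [lra | apply: pow_le; lra].
have := pos_INR (minority (iter j pair_reduce v)); nra.
Qed.

(* The length guard is what makes the event rare for every length n: the
   phase-k slack satisfies slack^2 >= 1000 r n only for n <= N / 2^k, which
   holds for the k-th reduction of a string of length N. *)
Definition bad_phase (N : nat) (u : R) (k : nat) (w : seq bool) : bool :=
  (2 ^ k * size w <= N)%nat && few_unequal_pairs (phase_slack u k) w.

Lemma pow_9_8_ge1 k : 1 <= (3 / 4) ^ k * (3 / 4) ^ k * 2 ^ k.
Proof.
elim: k => [|k IH] /=; first lra.
have : 0 <= (3 / 4) ^ k * (3 / 4) ^ k * 2 ^ k by lra.
nra.
Qed.

Lemma prob_le_bad_phase N (r u : R) k : 1 <= r -> 0 < u -> u * u = r * INR N ->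
  prob_le (Rpower 2 (- r)) (bad_phase N u k).
Proof.
move=> hr hu huu n a.
have he : 0 < Rpower 2 (- r) by apply: exp_pos.
case: (leqP (2 ^ k * n) N) => h; last first.
  rewrite (@eq_count_strings n a _ (fun=> false)) => [|w hw _].
    by rewrite count_strings_const /=; apply: Rmult_le_pos; [lra | apply: pos_INR].
  by rewrite /bad_phase hw leqNgt h.
apply: Rle_trans (@count_few_unequal_pairs n a (phase_slack u k) r hr _ _).
- by apply/le_INR/leP/count_strings_sub => w _ _ /andP[].
- by rewrite /phase_slack; apply: Rmult_le_pos; [lra | apply: pow_le; lra].
have hN : 2 ^ k * INR n <= INR N by rewrite -INR_expn2 -INR_muln; apply/le_INR/leP.
have hp := pow_9_8_ge1 k; have hn := pos_INR n.
have h2 : 0 < 2 ^ k by apply: pow_lt; lra.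
have h34 : 0 <= (3 / 4) ^ k * (3 / 4) ^ k by apply: Rmult_le_pos; apply: pow_le; lra.
have h3 : INR n <= (3 / 4) ^ k * (3 / 4) ^ k * INR N.
  have : INR n <= (3 / 4) ^ k * (3 / 4) ^ k * 2 ^ k * INR n by nra.
  nra.
rewrite /phase_slack (_ : 32 * u * (3 / 4) ^ k * (32 * u * (3 / 4) ^ k) =
                          1024 * (u * u) * ((3 / 4) ^ k * (3 / 4) ^ k)); last ring.
rewrite huu; have : 0 <= r * INR n by apply: Rmult_le_pos; lra.
nra.
Qed.

Lemma count_strings_has_le n a (F : nat -> pred (seq bool)) ks :
  (count_strings n a (fun v => has (fun k => F k v) ks) <=
   \sum_(k <- ks) count_strings n a (F k))%nat.
Proof.
elim: ks => [|k ks IH].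
  by rewrite big_nil -[0%N](count_strings_const n a false).
rewrite big_cons; apply: (leq_trans _ (leq_add (leqnn _) IH)); rewrite /count_strings /=.
elim: (bitseqs n) => [|x s IHs] //=.
by case: (_ == a); case: (F k x); case: has => /=; lia.
Qed.

Lemma trunc_log_le_log2 N : (0 < N)%nat -> INR (trunc_log 2 N) <= log2 (INR N).
Proof.
move=> hN; have := trunc_logP (isT : (1 < 2)%nat) hN; set L := trunc_log 2 N => hL.
have h2 : 2 ^ L <= INR N by rewrite -INR_expn2; apply/le_INR/leP.
have hl2 : 0 < ln 2 by have := ln_lt_2; lra.
have h4 : ln (2 ^ L) <= ln (INR N).
  case: (Rle_lt_or_eq_dec _ _ h2) => [hlt|->]; last lra.
  by apply/Rlt_le/ln_increasing => //; apply: pow_lt; lra.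
rewrite ln_pow in h4; last lra.
rewrite /log2; apply: (Rmult_le_reg_r (ln 2)) => //.
by rewrite /Rdiv Rmult_assoc Rinv_l; lra.
Qed.

Lemma card_C_OP_ge N A (t : R) :
  #|[set X : N.-tuple bool | (count id X == A) && Rleb t (INR (C_OP X))]| =
  count_strings N A
    (fun v => Rleb t (INR (\sum_(i < trunc_log 2 N) (size (iter i pair_reduce v))./2))).
Proof.
rewrite /count_strings -card_tuple_bitseqs; apply: eq_card => X.
by rewrite !inE C_OP_pair_reduce.
Qed.

Lemma has_bad_phase N A (u : R) v : size v = N -> count id v = A -> 0 < u ->
  INR N - 2 / 3 * INR (minn A (N - A)) + 50 * u <=
    INR (\sum_(i < trunc_log 2 N) (size (iter i pair_reduce v))./2) ->
  has (fun k => bad_phase N u k (iter k pair_reduce v)) (iota 0 (trunc_log 2 N)).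
Proof.
move=> hv hc hu hle; apply: contraT => /hasPn hgood.
have hfew k : (k < trunc_log 2 N)%nat ->
    ~~ few_unequal_pairs (phase_slack u k) (iter k pair_reduce v).
  move=> hk; have := hgood k; rewrite mem_iota add0n hk /bad_phase => /(_ isT).
  by rewrite -hv size_iter_pair_reduce.
by have := sum_half_sizes_lt hu hfew; rewrite /minority hv hc; lra.
Qed.

Lemma count_C_OP_large_le N A (r : R) : (0 < N)%nat -> 1 <= r ->
  let t := INR N - 2 / 3 * INR (minn A (N - A)) + 50 * sqrt (r * INR N) in
  INR (count_strings N A
    (fun v => Rleb t (INR (\sum_(i < trunc_log 2 N) (size (iter i pair_reduce v))./2)))) <=
  INR (trunc_log 2 N) * (Rpower 2 (- r) * INR 'C(N, A)).
Proof.
move=> hN hr t; set L := trunc_log 2 N; set u := sqrt (r * INR N).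
have hrN : 0 < r * INR N by apply: Rmult_lt_0_compat; [lra | apply/lt_0_INR/ltP].
have hu : u * u = r * INR N by apply: sqrt_def; lra.
have hu0 : 0 < u by apply: sqrt_lt_R0.
set bad := fun k v => bad_phase N u k (iter k pair_reduce v).
have hk k : INR (count_strings N A (bad k)) <= Rpower 2 (- r) * INR 'C(N, A).
  exact: (prob_le_iter_pair_reduce k (Rlt_le _ _ (exp_pos _)) (prob_le_bad_phase k hr hu0 hu)).
apply: Rle_trans (_ : INR (\sum_(k <- iota 0 L) count_strings N A (bad k)) <= _).
  apply/le_INR/leP/(leq_trans _ (count_strings_has_le _ _ _ _))/count_strings_sub.
  by move=> v hv hc; rewrite /Rleb; case: Rle_dec => //= hle _; exact: has_bad_phase hv hc hu0 hle.
rewrite -[X in INR X * _](size_iota 0 L).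
elim: (iota 0 L) => [|k ks IH]; first by rewrite big_nil /=; lra.
by rewrite big_cons INR_addn [size _]/= S_INR; have := hk k; lra.
Qed.

Theorem mainTheorem4 :
  exists d : R, forall (N A B : nat), (0 < N)%N -> (A + B)%N = N ->
    forall r : R, 1 <= r ->
      prob_OP N A B d r <= Rpower 2 (- r) * log2 (INR N).
Proof.
exists 50 => N A B hN hAB r hr.
have -> : B = (N - A)%nat by lia.
have hcount := count_C_OP_large_le A hN hr; have hlog := trunc_log_le_log2 hN.
have hC : 0 < INR 'C(N, A) by apply/lt_0_INR/ltP; rewrite bin_gt0; lia.
have he : 0 < Rpower 2 (- r) by apply: exp_pos.
rewrite /prob_OP card_C_OP_ge; apply: (Rmult_le_reg_r (INR 'C(N, A))) => //.
rewrite /Rdiv Rmult_assoc Rinv_l; last lra.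
have := Rmult_le_compat_r _ _ _ (Rlt_le _ _ (Rmult_lt_0_compat _ _ he hC)) hlog.
lra.
Qed.
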